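(* Let $n\ge1$. Among the elements of $R$ whose binary representation has length $2n+5$, exactly one has binary representation beginning with $1000$, namely $[1000(10)^n0]_2$; moreover $[1000(10)^n0]_2$ is the smallest element of $R$ whose binary representation has length $2n+5$.
   Context: Stern's sequence $(a(n))_{n\ge0}$: $a(0)=0$, $a(1)=1$, $a(2n)=a(n)$, $a(2n+1)=a(n)+a(n+1)$; $s(n)=a(n+1)$. $R$ is the set of record-setters of $s$, i.e. indices $v\ge0$ with $s(i)<s(v)$ for all $i<v$. Binary representations have no leading zeros. For a binary string $x$, $[x]_2$ is the integer it represents in base 2; $x^i$ denotes $i$-fold concatenation. *)

From mathcomp Require Import all_boot.
Set Implicit Arguments. Unset Strict Implicit. Unset Printing Implicit Defensive.

(* Stern's diatomic sequence a(n), computed with fuel (fuel n suffices). *)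
Fixpoint sternF (k n : nat) : nat :=
  match k with
  | 0 => 0
  | k'.+1 => if n <= 1 then n
             else if odd n then sternF k' n./2 + sternF k' n./2.+1
             else sternF k' n./2
  end.
Definition stern (n : nat) : nat := sternF n n.

Definition s (n : nat) : nat := stern n.+1.

Definition record_setter (v : nat) : Prop := forall i, i < v -> s i < s v.

(* binary representation, most significant bit first, no leading zeros *)
Fixpoint binF (k v : nat) : seq bool :=
  match k with
  | 0 => [::]
  | k'.+1 => if v is 0 then [::] else rcons (binF k' v./2) (odd v)
  end.
Definition bin_of (v : nat) : seq bool := binF v v.

Definition bin_val (x : seq bool) : nat := foldl (fun acc (b : bool) => acc.*2 + nat_of_bool b) 0 x.

Definition w_str (n : nat) : seq bool :=
  [:: true; false; false; false] ++ flatten (nseq n [:: true; false]) ++ [:: false].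

Definition pre1000 : seq bool := [:: true; false; false; false].

From mathcomp Require Import all_boot zify.
Set Implicit Arguments. Unset Strict Implicit. Unset Printing Implicit Defensive.

(* Reading the binary digits of v from the most significant one, the pair
   (a(v), a(v+1)) evolves by (p, q) -> (p + q, q) on a 1 and (p, q) -> (p, p + q)
   on a 0, starting from (0, 1).  After the prefix 1000 the pair is (1, 4), and
   each further block 10 acts by a Fibonacci matrix.  A string of length L can
   reach at most F(L+1), attained by (10)^k, so every index below 2^(2n+4) has
   s-value at most F(2n+5), which s([1000(10)^n 0]_2) exceeds.  Comparing the
   remaining strings 1000 z of length 2n+5 with 1000(10)^n 0 at their first
   difference shows that each is either larger with a smaller s-value, or has
   s-value at most F(2n+5) and so is beaten by [(10)^(n+2)]_2 < 2^(2n+4). *)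

Lemma sternF_fuel k k' n : n <= k -> n <= k' -> sternF k n = sternF k' n.
Proof.
elim: k k' n => [|k IH] [|k'] n le_n_k le_n_k'; try by rewrite (_ : n = 0) //; lia.
rewrite /=; case: ifP => // n_gt1; case: ifP => odd_n.
  by rewrite (IH k' n./2) ?(IH k' n./2.+1) //; lia.
by rewrite (IH k' n./2) //; lia.
Qed.

Lemma stern_half n : 2 <= n ->
  stern n = if odd n then stern n./2 + stern n./2.+1 else stern n./2.
Proof.
case: n => [|k] // le2k; rewrite {1}/stern /= /stern uphalf_half.
have -> : (k.+1 <= 1) = false by lia.
set h := odd k + k./2; case: ifP => even_k.
  by rewrite (@sternF_fuel k h h) ?(@sternF_fuel k h.+1 h.+1) // /h; lia.
by rewrite (@sternF_fuel k h h) // /h; lia.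
Qed.

Lemma stern_double m : stern m.*2 = stern m.
Proof. by case: m => [|m] //; rewrite stern_half ?odd_double ?doubleK //; lia. Qed.

Lemma stern_doubleS m : stern m.*2.+1 = stern m + stern m.+1.
Proof.
case: m => [|m] //; rewrite stern_half; last by lia.
by rewrite oddS odd_double (_ : (m.+1).*2.+1./2 = m.+1) //; lia.
Qed.

Lemma binF_fuel k k' v : v <= k -> v <= k' -> binF k v = binF k' v.
Proof.
elim: k k' v => [|k IH] [|k'] [|v] //= le_v_k le_v_k'; try lia.
by rewrite (IH k') // uphalf_half; lia.
Qed.

Lemma bin_of_half v : 0 < v -> bin_of v = rcons (bin_of v./2) (odd v).
Proof.
by case: v => [|v] // _; rewrite {1}/bin_of /= /bin_of (@binF_fuel v (v.+1)./2) //; lia.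
Qed.

Lemma bin_val_rcons x b : bin_val (rcons x b) = (bin_val x).*2 + b.
Proof. by rewrite /bin_val -cats1 foldl_cat. Qed.

Lemma bin_val_cat x y : bin_val (x ++ y) = bin_val x * 2 ^ size y + bin_val y.
Proof.
elim/last_ind: y => [|y b IH]; first by rewrite cats0 muln1 addn0.
by rewrite -rcons_cat !bin_val_rcons IH size_rcons expnS; lia.
Qed.

Lemma bin_val_cons b y : bin_val (b :: y) = b * 2 ^ size y + bin_val y.
Proof. by rewrite -cat1s bin_val_cat; case: b. Qed.

Lemma bin_val_lt x : bin_val x < 2 ^ size x.
Proof.
by elim/last_ind: x => [|x b IH] //; rewrite bin_val_rcons size_rcons expnS; case: b; lia.
Qed.

Lemma bin_ofK v : bin_val (bin_of v) = v.
Proof.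
elim/ltn_ind: v => v IH; case: (posnP v) => [-> //|v_gt0].
by rewrite bin_of_half // bin_val_rcons IH; lia.
Qed.

Lemma bin_valK x : bin_of (bin_val (true :: x)) = true :: x.
Proof.
elim/last_ind: x => [|x b IH] //.
have pos : 0 < bin_val (true :: x) by rewrite bin_val_cons /=; have := expn_gt0 2 (size x); lia.
rewrite -rcons_cons bin_val_rcons bin_of_half; last by lia.
have -> : ((bin_val (true :: x)).*2 + b)./2 = bin_val (true :: x) by case: b; lia.
by rewrite oddD odd_double IH; case: b.
Qed.

Lemma size_bin_of_leq v k : (size (bin_of v) <= k) = (v < 2 ^ k).
Proof.
apply/idP/idP => [le_size|].
  by rewrite -(bin_ofK v); apply: leq_trans (bin_val_lt _) _; rewrite leq_exp2l.
elim: k v => [|k IH] v; first by rewrite expn0 ltnS leqn0 => /eqP->.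
case: (posnP v) => [-> //|v_gt0] lt_v; rewrite bin_of_half // size_rcons ltnS IH //.
by rewrite expnS in lt_v; lia.
Qed.

Lemma size_bin_of_eq v L : (size (bin_of v) == L.+1) = (2 ^ L <= v < 2 ^ L.+1).
Proof.
rewrite eqn_leq size_bin_of_leq andbC; congr (_ && _).
by rewrite leqNgt ltnS size_bin_of_leq -leqNgt.
Qed.

Lemma bin_val_cat_ltn p x y : size x = size y ->
  bin_val (p ++ false :: x) < bin_val (p ++ true :: y).
Proof.
move=> eq_size; rewrite !bin_val_cat /= eq_size ltn_add2l !bin_val_cons /= eq_size.
by have := bin_val_lt x; rewrite eq_size; lia.
Qed.

Lemma bin_of_prefix1000 v m : size (bin_of v) = m + 4 -> v < 9 * 2 ^ m ->
  prefix pre1000 (bin_of v).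
Proof.
move=> size_v lt_v.
have lo : 2 ^ m.+3 <= v by rewrite leqNgt -size_bin_of_leq size_v; lia.
move: size_v lt_v lo; rewrite -{2 3}(bin_ofK v).
case: (bin_of v) => [|b0 [|b1 [|b2 [|b3 z]]]] //= size_v lt_v lo; try lia.
have {}size_v : size z = m by lia.
have := bin_val_lt z; rewrite !bin_val_cons /= size_v !expnS in lt_v lo *.
by case: b0 b1 b2 b3 lt_v lo => [] [] [] [] /= lt_v lo; rewrite ?prefix_prefix //; lia.
Qed.

Definition stern_step (st : nat * nat) (b : bool) : nat * nat :=
  if b then (st.1 + st.2, st.2) else (st.1, st.1 + st.2).

Definition stern_run (st : nat * nat) (x : seq bool) : nat * nat := foldl stern_step st x.

Lemma stern_run_cat st x y : stern_run st (x ++ y) = stern_run (stern_run st x) y.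
Proof. exact: foldl_cat. Qed.

Lemma stern_run_bin_val x :
  stern_run (0, 1) x = (stern (bin_val x), stern (bin_val x).+1).
Proof.
elim/last_ind: x => [|x b IH] //.
rewrite -cats1 stern_run_cat IH cats1 bin_val_rcons.
case: b; rewrite /= /stern_step /=.
  by rewrite addn1 stern_doubleS -doubleS stern_double.
by rewrite addn0 stern_double stern_doubleS.
Qed.

Lemma s_bin_val_cat x y : s (bin_val (x ++ y)) = (stern_run (stern_run (0, 1) x) y).2.
Proof. by rewrite -stern_run_cat stern_run_bin_val. Qed.

Fixpoint fib n := if n is (m.+1 as p).+1 then fib p + fib m else n.

Lemma fibSS n : fib n.+2 = fib n.+1 + fib n.
Proof. by []. Qed.

Lemma leq_fibS n : fib n <= fib n.+1.
Proof. by case: n => // n; rewrite fibSS leq_addr. Qed.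

Lemma leq_fib m n : m <= n -> fib m <= fib n.
Proof.
move=> le_mn; rewrite -(subnK le_mn); elim: (n - m) => // d IH.
exact: leq_trans IH (leq_fibS _).
Qed.

Lemma fib_gt0 n : 0 < n -> 0 < fib n.
Proof. by move=> n_gt0; apply: leq_trans (leq_fib n_gt0). Qed.

Lemma fibD m n : fib (m + n).+1 = fib m.+1 * fib n.+1 + fib m * fib n.
Proof.
suff: fib (m + n).+1 = fib m.+1 * fib n.+1 + fib m * fib n /\
      fib (m.+1 + n).+1 = fib m.+2 * fib n.+1 + fib m.+1 * fib n by case.
elim: m => [|m [IH IH']].
  by rewrite add0n add1n fibSS -[fib 2]/1 -[fib 1]/1 -[fib 0]/0; split; lia.
split=> //; rewrite !addSn fibSS -addSn IH' IH (fibSS m.+1) (fibSS m); lia.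
Qed.

Lemma fib_double_leq k : 3 * fib k.*2 <= 2 * fib k.*2.+1.
Proof.
case: k => [|k] //; rewrite (_ : (k.+1).*2 = k.*2.+2); last by lia.
by rewrite !fibSS; have := leq_fibS k.*2; lia.
Qed.

(* One step turns the bounds (max <= M, min <= m) into (M + m, M). *)
Lemma stern_run_leq_fib y p q M m : p <= M -> q <= M -> minn p q <= m ->
  (stern_run (p, q) y).1 <= fib (size y).+1 * M + fib (size y) * m /\
  (stern_run (p, q) y).2 <= fib (size y).+1 * M + fib (size y) * m.
Proof.
elim: y p q M m => [|b y IH] p q M m le_pM le_qM le_min; first by rewrite /=; lia.
rewrite (_ : stern_run _ (b :: y) = stern_run (stern_step (p, q) b) y) // [size _]/= fibSS.
have := IH _ _ (M + m) M; case: b => IHb; rewrite [stern_step _ _]/=.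
  by have := IHb (p + q) q; lia.
by have := IHb p (p + q); lia.
Qed.

Lemma s_leq_fib i N : size (bin_of i) <= N -> s i <= fib N.+1.
Proof.
move=> le_size; rewrite -(bin_ofK i) -[bin_of i]cat0s s_bin_val_cat.
have [_ le_s] := @stern_run_leq_fib (bin_of i) 0 1 1 0 (leq0n _) (leqnn _) (leqnn _).
by apply: leq_trans le_s _; rewrite muln1 muln0 addn0 leq_fib.
Qed.

Definition alt m : seq bool := flatten (nseq m [:: true; false]).

Lemma altS m : alt m.+1 = [:: true, false & alt m].
Proof. by []. Qed.

Lemma size_alt m : size (alt m) = m.*2.
Proof. by elim: m => //= m ->. Qed.

Lemma alt_add k j : alt (k + j) = alt k ++ alt j.
Proof. by elim: k => // k IH; rewrite addSn !altS IH. Qed.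

Lemma stern_run_alt p q j : stern_run (p, q) (alt j.+1) =
  (p * fib j.*2.+1 + q * fib j.*2.+2, p * fib j.*2.+2 + q * fib j.*2.+3).
Proof.
elim: j p q => [|j IH] p q; first by rewrite /stern_run /stern_step /=; f_equal; lia.
rewrite altS -[[:: true, false & _]]/([:: true; false] ++ _) stern_run_cat IH.
rewrite [stern_step _ _]/= [(_, _).1]/= [(_, _).2]/= doubleS !fibSS.
by f_equal; lia.
Qed.

Lemma s_bin_val_alt m : s (bin_val (alt m)) = fib m.*2.+1.
Proof.
case: m => [|m] //.
by rewrite -[alt _]cat0s s_bin_val_cat stern_run_alt doubleS !mul0n !mul1n !add0n.
Qed.

Lemma stern_run_pre1000_alt k : stern_run (0, 1) (pre1000 ++ alt k) =
  (fib k.*2.+2 + 2 * fib k.*2, fib k.*2.+3 + 2 * fib k.*2.+1).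
Proof.
rewrite stern_run_cat (_ : stern_run (0, 1) pre1000 = (1, 4)) //.
by case: k => [|k] //; rewrite stern_run_alt doubleS !fibSS; f_equal; lia.
Qed.

Lemma w_strE n : w_str n = pre1000 ++ alt n ++ [:: false].
Proof. by []. Qed.

Lemma s_w_str n : s (bin_val (w_str n)) =
  fib n.*2.+2 + 2 * fib n.*2 + (fib n.*2.+3 + 2 * fib n.*2.+1).
Proof. by rewrite w_strE catA s_bin_val_cat stern_run_pre1000_alt. Qed.

Lemma fib_lt_s_w_str n : 0 < n -> fib (n.*2 + 5) < s (bin_val (w_str n)).
Proof.
move=> n_gt0; have : 0 < fib n.*2 by apply: fib_gt0; lia.
rewrite s_w_str (_ : n.*2 + 5 = n.*2.+3.+2); last by lia.
by rewrite !fibSS; lia.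
Qed.

Lemma w_str_bounds n : 2 ^ (n.*2 + 4) <= bin_val (w_str n) < 9 * 2 ^ n.*2.+1.
Proof.
rewrite w_strE bin_val_cat size_cat size_alt addn1 (_ : bin_val pre1000 = 8) //.
have := bin_val_lt (alt n ++ [:: false]); rewrite size_cat size_alt addn1.
by rewrite (_ : n.*2 + 4 = n.*2.+1 + 3) ?expnD //; lia.
Qed.

(* Locate the first difference between z and (10)^m 0. *)
Lemma alt_prefix_cases m z : size z = m.*2.+1 ->
  [\/ z = alt m ++ [:: false], z = alt m ++ [:: true],
      exists k j y, [/\ m = k + j.+1, size y = j.*2.+1 & z = alt k ++ [:: true, true & y]]
    | exists k j y, [/\ m = k + j.+1, size y = j.*2.+2 & z = alt k ++ false :: y]].
Proof.
elim: m z => [|m IH] [|[] [|[] z]] //= size_z; try by [apply: Or41 | apply: Or42].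
- by apply: Or43; exists 0, m, z; split => //; lia.
- have [->|->|[k [j [y [-> ? ->]]]]|[k [j [y [-> ? ->]]]]] := IH z (ltac:(lia)).
  + exact: Or41.
  + exact: Or42.
  + by apply: Or43; exists k.+1, j, y.
  + by apply: Or44; exists k.+1, j, y.
- by apply: Or44; exists 0, m, (true :: z); split => //=; lia.
- by apply: Or44; exists 0, m, (false :: z); split => //=; lia.
Qed.

Lemma stern_run_true_true_ltn p q j y : 0 < p -> size y = j.*2.+1 ->
  (stern_run (p, q) [:: true, true & y]).2 < (stern_run (p, q) (alt j.+1 ++ [:: false])).2.
Proof.
move=> p_gt0 size_y; have c_gt0 : 0 < fib j.*2.+1 by apply: fib_gt0.
have [_ bound] := @stern_run_leq_fib y (p + q + q) q _ q (leqnn _) (leq_addl _ _) (geq_minr _ _).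
rewrite (_ : stern_run _ [:: true, true & y] = stern_run (p + q + q, q) y) //.
apply: leq_ltn_trans bound _; rewrite stern_run_cat stern_run_alt size_y (fibSS j.*2.+1).
by move: (fib j.*2.+1) (fib j.*2.+2) c_gt0 => c d c_gt0 /=; nia.
Qed.

Lemma s_pre1000_alt_false_leq k j y : size y = j.*2.+2 ->
  s (bin_val (pre1000 ++ alt k ++ false :: y)) <= fib ((k + j.+1).*2 + 5).
Proof.
move=> size_y; rewrite catA s_bin_val_cat stern_run_pre1000_alt.
set P := _ + _; set Q := _ + _.
have [_ bound] := @stern_run_leq_fib y P (P + Q) _ P (leq_addr _ _) (leqnn _) (geq_minl _ _).
rewrite (_ : stern_run _ (false :: y) = stern_run (P, P + Q) y) //.
apply: leq_trans bound _.
rewrite (_ : (k + j.+1).*2 + 5 = (k.*2.+4 + j.*2.+2).+1); last by lia.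
rewrite fibD size_y /P /Q; have := fib_double_leq k.
rewrite !fibSS; move: (fib k.*2) (fib k.*2.+1) (fib j.*2) (fib j.*2.+1) => a b e f; nia.
Qed.

Lemma pre1000_trichotomy n v : 0 < n -> size (bin_of v) = n.*2 + 5 ->
  prefix pre1000 (bin_of v) ->
  [\/ v = bin_val (w_str n),
      bin_val (w_str n) < v /\ s v < s (bin_val (w_str n))
    | s v <= fib (n.*2 + 5)].
Proof.
move=> n_gt0 size_v /prefixP[z def_v].
have size_z : size z = n.*2.+1 by move: size_v; rewrite def_v size_cat /=; lia.
rewrite -(bin_ofK v) def_v w_strE.
have P_gt0 k : 0 < (stern_run (0, 1) (pre1000 ++ alt k)).1.
  by rewrite stern_run_pre1000_alt addn_gt0 fib_gt0.
case: (alt_prefix_cases size_z) => [->|->|[k [j [y [-> size_y ->]]]]|[k [j [y [-> size_y ->]]]]].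
- exact: Or31.
- apply: Or32; rewrite !catA bin_val_cat_ltn //; split=> //.
  rewrite !s_bin_val_cat; move: (P_gt0 n); case: stern_run => p q /=; lia.
- rewrite alt_add; apply: Or32; split.
    rewrite (_ : _ ++ _ ++ [:: true, true & y] = (pre1000 ++ alt k ++ [:: true]) ++ true :: y);
      last by rewrite -!catA.
    rewrite (_ : _ ++ _ ++ [:: false] =
                 (pre1000 ++ alt k ++ [:: true]) ++ false :: alt j ++ [:: false]);
      last by rewrite altS -!catA.
    by rewrite bin_val_cat_ltn // size_cat size_alt size_y addn1.
  rewrite !catA -!(catA (pre1000 ++ alt k)) !s_bin_val_cat.
  move: (P_gt0 k); case: stern_run => p q /= p_gt0.
  exact: stern_run_true_true_ltn.
- by apply: Or33; apply: s_pre1000_alt_false_leq.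
Qed.

Lemma record_setter_w_str n : 0 < n -> record_setter (bin_val (w_str n)).
Proof.
move=> n_gt0 i lt_i; have /andP[lo hi] := w_str_bounds n.
have fib_lt := fib_lt_s_w_str n_gt0.
case: (ltnP i (2 ^ (n.*2 + 4))) => [small|large].
  by have := @s_leq_fib i (n.*2 + 4); rewrite size_bin_of_leq small -addnS; lia.
have size_i : size (bin_of i) = n.*2 + 5.
  have pow_eq : 2 ^ (n.*2 + 4) = 8 * 2 ^ n.*2.+1.
    by rewrite (_ : n.*2 + 4 = 3 + n.*2.+1) ?expnD //; lia.
  by apply/eqP; rewrite addnS size_bin_of_eq large /= expnS; lia.
have pre_i : prefix pre1000 (bin_of i).
  by apply: (@bin_of_prefix1000 _ n.*2.+1); rewrite ?size_i; lia.
by case: (pre1000_trichotomy n_gt0 size_i pre_i); lia.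
Qed.

Lemma record_setter_pre1000_eq n v : 0 < n -> record_setter v ->
  size (bin_of v) = n.*2 + 5 -> prefix pre1000 (bin_of v) -> v = bin_val (w_str n).
Proof.
move=> n_gt0 rec_v size_v pre_v.
have /andP[lo _] : 2 ^ (n.*2 + 4) <= v < 2 ^ (n.*2 + 4).+1.
  by rewrite -size_bin_of_eq size_v -addnS.
have alt_lt : bin_val (alt n.+2) < v.
  apply: leq_trans lo; have := bin_val_lt (alt n.+2).
  by rewrite size_alt (_ : (n.+2).*2 = n.*2 + 4) //; lia.
case: (pre1000_trichotomy n_gt0 size_v pre_v) => // [[lt_wv lt_s]|le_fib].
  by have := rec_v _ lt_wv; lia.
by have := rec_v _ alt_lt; rewrite s_bin_val_alt (_ : (n.+2).*2.+1 = n.*2 + 5) //; lia.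
Qed.

Lemma w_str_leq_record_setter n v : 0 < n -> record_setter v ->
  size (bin_of v) = n.*2 + 5 -> bin_val (w_str n) <= v.
Proof.
move=> n_gt0 rec_v size_v; have /andP[_ hi] := w_str_bounds n.
case: (ltnP v (9 * 2 ^ n.*2.+1)) => [lt_v|]; last by lia.
rewrite (record_setter_pre1000_eq n_gt0 rec_v size_v) //.
by apply: (@bin_of_prefix1000 _ n.*2.+1); rewrite ?size_v //; lia.
Qed.

Theorem mainTheorem16 (n : nat) : 1 <= n ->
  [/\ record_setter (bin_val (w_str n)),
      bin_of (bin_val (w_str n)) = w_str n,
      size (w_str n) = 2 * n + 5,
      (forall v, record_setter v -> size (bin_of v) = 2 * n + 5 ->
         prefix pre1000 (bin_of v) -> v = bin_val (w_str n))
    & (forall v, record_setter v -> size (bin_of v) = 2 * n + 5 ->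
         bin_val (w_str n) <= v)].
Proof.
move=> n_gt0; rewrite mul2n; split.
- exact: record_setter_w_str.
- exact: (bin_valK ([:: false; false; false] ++ alt n ++ [:: false])).
- by rewrite w_strE !size_cat size_alt /=; lia.
- by move=> v; apply: record_setter_pre1000_eq.
- by move=> v; apply: w_str_leq_record_setter.
Qed.
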